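(* Let $K\ge 2$ and let $O_1,\dots,O_K\subset\mathbb{R}^3$ be watertight objects with signed distance functions $SDF_1,\dots,SDF_K$, and set $SDF=[SDF_1,\ldots,SDF_K]:\mathbb{R}^3\to\mathbb{R}^K$. Then $SDF$ satisfies $\min^{(2)}(\mathbf{u})\ge 0$ at every point $\mathbf{p}\in\mathbb{R}^3$, where $\mathbf{u}=SDF(\mathbf{p})$, if and only if it satisfies $$\min^{(1)}(\mathbf{u})+\min^{(2)}(\mathbf{u})\ge 0$$ at every point $\mathbf{p}\in\mathbb{R}^3$, where $\mathbf{u}=SDF(\mathbf{p})$.
   Context: For a watertight object $O\subset\mathbb{R}^3$ with boundary $\partial O$, its signed distance function is $SDF_O(\mathbf{p})=-\min_{\mathbf{q}\in\partial O}\|\mathbf{p}-\mathbf{q}\|$ if $\mathbf{p}\in O$ and $SDF_O(\mathbf{p})=\min_{\mathbf{q}\in\partial O}\|\mathbf{p}-\mathbf{q}\|$ if $\mathbf{p}\notin O$ (negative inside, positive outside). For a vector $\mathbf{u}\in\mathbb{R}^K$, $\min^{(n)}(\mathbf{u})$ denotes the $n$-th smallest entry of $\mathbf{u}$ (counted with multiplicity), so $\min^{(1)}$ is the minimum and $\min^{(2)}$ the second smallest entry. *)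

From HB Require Import structures.
From mathcomp Require Import all_boot all_order all_algebra.
From mathcomp Require Import all_classical all_reals all_analysis.
Set Implicit Arguments. Unset Strict Implicit. Unset Printing Implicit Defensive.
Import Order.TTheory GRing.Theory Num.Theory.
Import numFieldNormedType.Exports.
Local Open Scope classical_set_scope.
Local Open Scope ring_scope.

(* Points of R^3 are row vectors 'rV[R]_3; topology = product topology
   (same as the Euclidean one). Distances are Euclidean. *)
Definition eucl_dist (R : realType) (p q : 'rV[R]_3) : R :=
  Num.sqrt (\sum_(i < 3) (p ord0 i - q ord0 i) ^+ 2).

Definition bdry (R : realType) (O : set 'rV[R]_3) : set 'rV[R]_3 :=
  closure O `\` interior O.

Definition watertight (R : realType) (O : set 'rV[R]_3) : Prop :=
  [/\ compact O, O = closure (interior O) & interior O !=set0].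

Definition SDF (R : realType) (O : set 'rV[R]_3) (p : 'rV[R]_3) : R :=
  let d := inf [set eucl_dist p q | q in bdry O] in
  if `[< O p >] then - d else d.

(* n-th smallest entry (1-based, with multiplicity) of u : R^K *)
Definition min_nth (R : realType) (K : nat) (n : nat) (u : 'I_K -> R) : R :=
  nth 0 (sort <=%R [seq u i | i <- enum 'I_K]) n.-1.

Definition SDFvec (R : realType) (K : nat) (O : 'I_K -> set 'rV[R]_3)
  (p : 'rV[R]_3) : 'I_K -> R := fun k => SDF (O k) p.

From HB Require Import structures.
From mathcomp Require Import all_boot all_order all_algebra.
From mathcomp Require Import all_classical all_reals all_analysis.
From mathcomp Require Import ring lra.
Import Order.TTheory GRing.Theory Num.Theory.
Import numFieldNormedType.Exports.
Local Open Scope classical_set_scope.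
Local Open Scope ring_scope.

(* Since SDF_k < 0 exactly on the interior of O_k, the condition
   min2 >= 0 everywhere says that no point is interior to two objects, and it
   suffices to show SDF_1 + SDF_2 >= 0 for two watertight objects with
   disjoint interiors. Let p be interior to O_1, at distance d from its
   boundary. Then p is not in O_2 = closure (interior O_2), and every q with
   |p - q| < d is interior to O_1, because the segment [p, q] is connected
   and misses the boundary of O_1; so no such q lies on the boundary of O_2,
   i.e. SDF_2 p >= d = - SDF_1 p. The converse follows from min1 <= min2. *)

Lemma connected_sub_interior {T : topologicalType} {A C : set T} :
  connected C -> C `&` A° !=set0 -> C `&` closure A `<=` A° -> C `<=` A°.
Proof.
move=> cC CA0 CAA; suff <- : C `&` A° = C by move=> x [].
apply: cC => //; first by exists A°; [exact: open_interior|].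
exists (closure A); first exact: closed_closure.
apply/seteqP; split=> x [Cx Ax]; split=> //; last exact: CAA.
exact: subset_closure (interior_subset Ax).
Qed.

Lemma connected_segment {R : realType} {V : normedModType R} (p q : V) :
  connected [set p + t *: (q - p) | t in `[0, 1]%classic].
Proof.
apply: connected_continuous_connected; first exact: segment_connected.
apply: continuous_subspaceT => t.
by apply: cvgD; [exact: cvg_cst | exact: scalel_continuous].
Qed.

Lemma interior_segment {R : realType} {V : normedModType R} {A : set V} {p q : V} :
  A° p ->
  (forall t, 0 <= t <= 1 -> closure A (p + t *: (q - p)) -> A° (p + t *: (q - p))) ->
  A° q.
Proof.
move=> Ap seg_int.
have in01 (t : R) : 0 <= t <= 1 -> `[0, 1]%classic t by rewrite /= in_itv.
apply: (connected_sub_interior (connected_segment p q)).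
- exists p; split=> //; exists 0; first by apply: in01; rewrite lexx ler01.
  by rewrite scale0r addr0.
- by move=> _ [[t + <-] cl]; rewrite /= in_itv => t01; exact: seg_int.
- by exists 1; [apply: in01; rewrite lexx ler01 | rewrite scale1r addrC subrK].
Qed.

Section euclidean_distance.
Context {R : realType}.
Implicit Types p q : 'rV[R]_3.

Lemma eucl_dist_ge0 p q : 0 <= eucl_dist p q.
Proof. exact: sqrtr_ge0. Qed.

Lemma eucl_distxx p : eucl_dist p p = 0.
Proof. by rewrite /eucl_dist big1 ?sqrtr0 // => i _; rewrite subrr expr0n. Qed.

Lemma eucl_dist_segment p q t : eucl_dist p (p + t *: (q - p)) = `|t| * eucl_dist p q.
Proof.
rewrite /eucl_dist -sqrtr_sqr -sqrtrM ?sqr_ge0 // mulr_sumr.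
congr Num.sqrt; apply: eq_bigr => i _; rewrite !mxE.
by rewrite -exprMn; congr (_ ^+ 2); ring.
Qed.

Lemma mx_norm_ge_entry p i : `|p ord0 i| <= `|p|.
Proof.
rewrite [`|p|]mx_normrE.
exact: (le_bigmax 0 (fun ij : 'I_1 * 'I_3 => `|p ij.1 ij.2|) (ord0, i)).
Qed.

Lemma norm_le_eucl_dist p q : `|p - q| <= eucl_dist p q.
Proof.
rewrite [`|p - q|]mx_normrE; apply: bigmax_le => [|[i j] _ /=]; first exact: sqrtr_ge0.
rewrite (ord1 i) /eucl_dist !mxE -sqrtr_sqr ler_sqrt; last first.
  by apply: sumr_ge0 => k _; exact: sqr_ge0.
by rewrite (bigD1 j) //= lerDl; apply: sumr_ge0 => k _; exact: sqr_ge0.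
Qed.

Lemma nbhs_eucl_ball {p} {A : set 'rV[R]_3} :
  nbhs p A -> exists2 e : R, 0 < e & forall q, eucl_dist p q < e -> A q.
Proof.
move=> /nbhs_ballP[e e0 pA]; exists e => // q pq; apply: pA.
by rewrite mx_norm_ball /ball_ /=; exact: le_lt_trans (norm_le_eucl_dist p q) pq.
Qed.

End euclidean_distance.

Definition bdist {R : realType} (O : set 'rV[R]_3) (p : 'rV[R]_3) : R :=
  inf [set eucl_dist p q | q in bdry O].

Section distance_to_boundary.
Context {R : realType}.
Implicit Types (O : set 'rV[R]_3) (p q : 'rV[R]_3).

Lemma SDFE O p : SDF O p = if `[< O p >] then - bdist O p else bdist O p.
Proof. by []. Qed.

Lemma bdist_ge0 O p : 0 <= bdist O p.
Proof.
rewrite /bdist; have [->|/set0P[q bq]] := eqVneq (bdry O) set0.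
  by rewrite image_set0 inf0.
apply: lb_le_inf; first by exists (eucl_dist p q), q.
by move=> _ [r _ <-]; exact: eucl_dist_ge0.
Qed.

Lemma bdist_le O p q : bdry O q -> bdist O p <= eucl_dist p q.
Proof.
move=> bq; apply: ge_inf; last by exists q.
by exists 0 => _ [r _ <-]; exact: eucl_dist_ge0.
Qed.

Lemma interior_lt_bdist {O p q} : O° p -> eucl_dist p q < bdist O p -> O° q.
Proof.
move=> Op pq; apply: (interior_segment Op) => t /andP[t0 t1] cl.
apply: contrapT => nint; have := bdist_le O p _ (conj cl nint).
rewrite eucl_dist_segment ger0_norm // => /(lt_le_trans pq).
by rewrite ltNge ler_piMl ?eucl_dist_ge0.
Qed.

End distance_to_boundary.

Section watertight_objects.
Context {R : realType}.
Implicit Types (O : set 'rV[R]_3) (p q : 'rV[R]_3).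

Lemma watertight_closed {O} : watertight O -> closed O.
Proof. by case=> cO _ _; apply: compact_closed => //; exact: norm_hausdorff. Qed.

Lemma watertight_bdry_sub {O} : watertight O -> bdry O `<=` O.
Proof. by move=> /watertight_closed /closure_id cO q [+ _]; rewrite -cO. Qed.

Lemma watertight_bdry_neq0 {O} : watertight O -> bdry O !=set0.
Proof.
(* Otherwise segments from an interior point never leave the interior, so O
   would be the whole (unbounded) space. *)
case=> cO _ [p Op]; apply: contrapT => /nonemptyPn b0.
have Ofull q : O q.
  apply: interior_subset; apply: (interior_segment Op) => t _ cl.
  by apply: contrapT => nint; have : bdry O (p + t *: (q - p)) by []; rewrite b0.
have [M M0 OM] := pinfty_ex_gt0 (compact_bounded cO).
have := OM _ (Ofull (const_mx (M + 1))).
have := mx_norm_ge_entry (const_mx (M + 1) : 'rV[R]_3) ord0.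
by rewrite mxE ger0_norm /=; lra.
Qed.

Lemma watertight_bdist_gt0 {O p} : watertight O -> O° p -> 0 < bdist O p.
Proof.
move=> wO Op; have /nbhs_eucl_ball[e e0 pO] : nbhs p O°.
  by apply: open_nbhs_nbhs; split; [exact: open_interior|].
apply: (lt_le_trans e0); have [q bq] := watertight_bdry_neq0 wO.
apply: lb_le_inf; first by exists (eucl_dist p q), q.
by move=> _ [r [_ nOr] <-]; rewrite leNgt; apply/negP => /pO.
Qed.

Lemma watertight_SDF_lt0 {O} p : watertight O -> SDF O p < 0 <-> O° p.
Proof.
move=> wO; rewrite SDFE; split=> [|Op]; last first.
  by rewrite asboolT ?oppr_lt0 ?watertight_bdist_gt0 //; exact: interior_subset.
case: asboolP => [Op|_]; last by rewrite ltNge bdist_ge0.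
rewrite oppr_lt0 => d0; apply: contrapT => nOp.
by have := bdist_le O p p (conj (subset_closure Op) nOp); rewrite eucl_distxx leNgt d0.
Qed.

Lemma SDF_add_ge0 {O1 O2} p : watertight O1 -> watertight O2 ->
  O1° `&` O2° = set0 -> 0 <= SDF O1 p + SDF O2 p.
Proof.
wlog O1p : O1 O2 / SDF O1 p < 0 => [wlog w1 w2 O12|].
  have [|SO1] := ltP (SDF O1 p) 0; first by move/wlog; exact.
  have [SO2|SO2] := ltP (SDF O2 p) 0; last exact: addr_ge0.
  by rewrite addrC; apply: wlog => //; rewrite setIC.
move=> w1 w2 O12; have {}O1p := (watertight_SDF_lt0 p w1).1 O1p.
have O2_not_int1 q : O2 q -> ~ O1° q.
  case: w2 => _ -> _ O2q O1q.
  have O1nbhs : nbhs q O1° by apply: open_nbhs_nbhs; split; [exact: open_interior|].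
  case: (O2q _ O1nbhs) => x [in2 in1].
  by rewrite -[False]/(set0 x) -O12.
have O2p : ~ O2 p by move/O2_not_int1.
rewrite !SDFE (asboolT (interior_subset O1p)) (asboolF O2p) addrC subr_ge0.
have [q bq] := watertight_bdry_neq0 w2.
apply: lb_le_inf; first by exists (eucl_dist p q), q.
move=> _ [r br <-]; rewrite leNgt; apply/negP => /(interior_lt_bdist O1p).
exact: O2_not_int1 r (watertight_bdry_sub w2 r br).
Qed.

End watertight_objects.

Section order_statistics.
Context {R : realType} {K : nat}.
Implicit Types u : 'I_K -> R.

Lemma min_nth1_le2 u : (2 <= K)%N -> min_nth 1 u <= min_nth 2 u.
Proof.
move=> K2; apply: (sortedP 0 (sort_le_sorted _)).
by rewrite size_sort size_map size_enum_ord.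
Qed.

Lemma min_nth12_index u : (2 <= K)%N ->
  exists a b, [/\ a != b, min_nth 1 u = u a & min_nth 2 u = u b].
Proof.
move=> K2; have K0 : (0 < K)%N by exact: ltn_trans K2.
pose a0 := Ordinal K0; rewrite /min_nth /= sort_map.
set s := sort _ _; have size_s : size s = K by rewrite size_sort size_enum_ord.
exists (nth a0 s 0), (nth a0 s 1); split.
- by rewrite nth_uniq ?size_s ?sort_uniq ?enum_uniq.
- by apply: nth_map; rewrite size_s.
- by apply: nth_map; rewrite size_s.
Qed.

Lemma min_nth2_lt0 u i j : i != j -> u i < 0 -> u j < 0 -> min_nth 2 u < 0.
Proof.
move=> ij ui uj; apply: nth_count_lt; first exact: sort_le_sorted.
rewrite (permP (permEl (perm_sort _ _))) count_map -size_filter.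
apply: (@uniq_leq_size _ [:: i; j]) => [|k]; first by rewrite /= inE ij.
by rewrite !inE mem_filter mem_enum andbT => /orP[]/eqP->.
Qed.

End order_statistics.

Theorem theorem1 (R : realType) (K : nat) (O : 'I_K -> set 'rV[R]_3) :
  (2 <= K)%N ->
  (forall k, watertight (O k)) ->
  ((forall p : 'rV[R]_3, 0 <= min_nth 2 (SDFvec O p)) <->
   (forall p : 'rV[R]_3,
      0 <= min_nth 1 (SDFvec O p) + min_nth 2 (SDFvec O p))).
Proof.
move=> K2 wO; split=> [min2_ge0 p|sum_ge0 p]; last first.
  by have := sum_ge0 p; have := min_nth1_le2 (SDFvec O p) K2; lra.
have disjoint_interiors a b : a != b -> (O a)° `&` (O b)° = set0.
  move=> ab; apply/seteqP; split=> // x [Oa Ob].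
  have := min2_ge0 x; rewrite leNgt => /negP; apply.
  by apply: (min_nth2_lt0 _ _ _ ab); apply/(watertight_SDF_lt0 x (wO _)).
have [a [b [ab -> ->]]] := min_nth12_index (SDFvec O p) K2.
exact: SDF_add_ge0 p (wO a) (wO b) (disjoint_interiors a b ab).
Qed.
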